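(* Suppose $a\in C^2(\mathbb{R})$. Let $\tilde\alpha\in\mathbb{R}^2$ be such that $a'(\tilde\alpha_2)>0$. Given $s_0,t_0>0$ sufficiently small depending on the function $a$ and $\tilde\alpha_2$, the matrix $A$ is invertible. Moreover, for any $0<\epsilon<1$, the unique solution $\gamma_0^{\epsilon}$ of the system \begin{equation*} L^{\epsilon}(\gamma) = 0 \end{equation*} is non-negative componentwise. Further, there exist constants $0<\lambda<\Lambda<\infty$ depending on the function $a$, $\tilde\alpha_2$, $s_0$ and $t_0$ such that \begin{equation*} \lambda\epsilon \leq[\gamma_0^{\epsilon}]_i \leq \Lambda\epsilon \ \text{ for }\ i=1,2,3,4. \end{equation*}
   Context: Let $a:\mathbb{R}\to\mathbb{R}$, $F(\xi)=\int_0^\xi a(s)\,ds$, and for $\alpha\in\mathbb{R}^2$ let $$P_1^{\alpha}(u,v):=\begin{pmatrix} u-\alpha_1 & v-\alpha_2 \\ a(v)-a(\alpha_2) & u-\alpha_1\\ (u-\alpha_1)(a(v)-a(\alpha_2)) & \frac{(u-\alpha_1)^2}{2}+F(v)-F(\alpha_2)-a(\alpha_2)(v-\alpha_2) \end{pmatrix}.$$ Given $s_0,t_0>0$ set $\zeta_1:=P_1^{\tilde\alpha}(\tilde\alpha_1+s_0,\tilde\alpha_2)$, $\zeta_2:=P_1^{\tilde\alpha}(\tilde\alpha_1-s_0,\tilde\alpha_2)$, $\zeta_3:=P_1^{\tilde\alpha}(\tilde\alpha_1,\tilde\alpha_2+t_0)$, $\zeta_4:=P_1^{\tilde\alpha}(\tilde\alpha_1,\tilde\alpha_2-t_0)$.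 Let $D_1,D_2,D_3$ denote the $(1,2)$, $(2,3)$, $(1,3)$ row-minors of a $3\times 2$ matrix, respectively. Let $A\in M^{4\times 4}$ be the matrix whose $j$-th column is $(D_1(\zeta_j),D_2(\zeta_j),D_3(\zeta_j),1)^T$ for $j=1,2,3,4$, and for $\epsilon>0$, $\gamma\in\mathbb{R}^4$ define $L^{\epsilon}(\gamma):=A\gamma-(0,0,0,\epsilon)^T$. *)

From Stdlib Require Import Reals.
From Coquelicot Require Import Coquelicot.
From mathcomp Require Import all_boot all_algebra.
From mathcomp Require Import Rstruct.

Set Implicit Arguments.
Unset Strict Implicit.
Unset Printing Implicit Defensive.

Import GRing.Theory.
Local Open Scope ring_scope.

Definition C2 (a : R -> R) : Prop :=
  exists a' a'' : R -> R,
    (forall x, is_derive a x (a' x)) /\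
    (forall x, is_derive a' x (a'' x)) /\
    (forall x, continuous a'' x).

Definition Fint (a : R -> R) (xi : R) : R := RInt a 0%R xi.

Definition P1 (a : R -> R) (al1 al2 u v : R) : 'M[R]_(3,2) :=
  \matrix_(i < 3, j < 2)
    match nat_of_ord i, nat_of_ord j with
    | 0, 0 => u - al1
    | 0, _ => v - al2
    | 1, 0 => a v - a al2
    | 1, _ => u - al1
    | _, 0 => (u - al1) * (a v - a al2)
    | _, _ => (u - al1) ^+ 2 / 2%:R + Fint a v - Fint a al2 - a al2 * (v - al2)
    end.

Definition minor2 (M : 'M[R]_(3,2)) (r1 r2 : 'I_3) : R :=
  M r1 0 * M r2 1 - M r1 1 * M r2 0.

Definition D1 (M : 'M[R]_(3,2)) : R := minor2 M 0 1.
Definition D2 (M : 'M[R]_(3,2)) : R := minor2 M 1 (inord 2).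
Definition D3 (M : 'M[R]_(3,2)) : R := minor2 M 0 (inord 2).

(* zeta_1..zeta_4 (indexed 0..3) *)
Definition zeta (a : R -> R) (al1 al2 s0 t0 : R) (j : 'I_4) : 'M[R]_(3,2) :=
  match nat_of_ord j with
  | 0 => P1 a al1 al2 (al1 + s0) al2
  | 1 => P1 a al1 al2 (al1 - s0) al2
  | 2 => P1 a al1 al2 al1 (al2 + t0)
  | _ => P1 a al1 al2 al1 (al2 - t0)
  end.

Definition Amat (a : R -> R) (al1 al2 s0 t0 : R) : 'M[R]_4 :=
  \matrix_(i < 4, j < 4)
    let Z := zeta a al1 al2 s0 t0 j in
    match nat_of_ord i with
    | 0 => D1 Z
    | 1 => D2 Z
    | 2 => D3 Z
    | _ => 1
    end.

Definition epsvec (eps : R) : 'cV[R]_4 :=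
  \col_(i < 4) (if nat_of_ord i == 3%N then eps else 0).

Definition Leps (a : R -> R) (al1 al2 s0 t0 eps : R) (g : 'cV[R]_4) : 'cV[R]_4 :=
  Amat a al1 al2 s0 t0 *m g - epsvec eps.

(* A does not depend on alpha_1 and is explicit in s0, t0 and four increments
   at b = alpha_2: a(b + t0) - a(b), a(b - t0) - a(b), and the gaps
   F(b +- t0) - F(b) -+ a(b) t0 between F and its tangent at b.  Since a'(b) > 0,
   for small t0 the first is positive and the second negative; the gaps are
   positive because h |-> F(b + h) - F(b) - a(b) h has derivative
   a(b + h) - a(b), which has the sign of h.  Elimination then shows that every
   solution of A gamma = (0,0,0,eps) is eps / N times a fixed vector with
   positive entries summing to N.  With eps = 0 this gives invertibility; the
   entries give lambda, and Lambda = 1 suffices. *)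

From Stdlib Require Import Reals Lra.
From Coquelicot Require Import Coquelicot.
From mathcomp Require Import all_boot all_order all_algebra.
From mathcomp Require Import Rstruct ring lra.
Import Order.TTheory GRing.Theory Num.Theory.

Set Implicit Arguments.
Unset Strict Implicit.
Unset Printing Implicit Defensive.

Section RealIncrements.
Local Open Scope R_scope.

Lemma derive_pos_increment (f : R -> R) (x l : R) :
  is_derive f x l -> 0 < l ->
  exists2 d, 0 < d & forall h, 0 < h < d -> f (x - h) < f x < f (x + h).
Proof.
move=> /is_derive_Reals f_lim l_gt0.
have [d quot_near_l] := f_lim l l_gt0.
exists d => [|h [h_gt0 h_lt_d]]; first exact: cond_pos.
have quot_pos k : k <> 0 -> Rabs k < d -> 0 < (f (x + k) - f x) / k.
  by move=> k_neq0 k_lt_d; have /Rabs_def2 := quot_near_l k k_neq0 k_lt_d; Lra.lra.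
have right_quot := quot_pos h ltac:(Lra.lra) ltac:(rewrite Rabs_right; Lra.lra).
have left_quot := quot_pos (- h) ltac:(Lra.lra) ltac:(rewrite Rabs_left; Lra.lra).
have := Rinv_0_lt_compat h h_gt0; have := Rinv_lt_0_compat (- h) ltac:(Lra.lra).
rewrite -[x + - h]/(x - h) /Rdiv in left_quot right_quot; split; Lra.nra.
Qed.

Lemma increasing_of_derive_pos (f f' : R -> R) (x y : R) :
  x < y -> (forall z, x <= z <= y -> is_derive f z (f' z)) ->
  (forall z, x < z < y -> 0 < f' z) -> f x < f y.
Proof.
move=> x_lt_y f_der f'_pos.
have [z [mvt z_in]] :=
  MVT_cor2 f f' x y x_lt_y (fun z hz => proj1 (is_derive_Reals _ _ _) (f_der z hz)).
have := f'_pos z z_in; Lra.nra.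
Qed.

Lemma is_derive_Fint (a : R -> R) (x : R) :
  (forall y, continuous a y) -> is_derive (Fint a) x (a x).
Proof.
move=> a_cont; apply: is_derive_RInt (a_cont x).
apply: filter_forall => y; apply: RInt_correct.
by apply: ex_RInt_continuous => z _; apply: a_cont.
Qed.

Lemma Fint_above_tangent (a : R -> R) (b d : R) :
  (forall y, continuous a y) ->
  (forall h, 0 < h < d -> a (b - h) < a b < a (b + h)) ->
  forall t, 0 < t < d ->
  Fint a b + a b * t < Fint a (b + t) /\ Fint a b - a b * t < Fint a (b - t).
Proof.
move=> a_cont a_incr t [t_gt0 t_lt_d].
pose psi u := Fint a u - a b * u.
have psi_der u : is_derive psi u (a u - a b).
  by apply: is_derive_minus; [exact: is_derive_Fint | auto_derive; Lra.lra].
have psi_right : psi b < psi (b + t).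
  apply: (increasing_of_derive_pos (f' := fun u => a u - a b)); first Lra.lra.
    by move=> z _; exact: psi_der.
  move=> z z_in; have := a_incr (z - b) ltac:(Lra.lra).
  by rewrite (_ : b + (z - b) = z); Lra.lra.
have psi_left : - psi (b - t) < - psi b.
  apply: (increasing_of_derive_pos (f := fun u => - psi u) (f' := fun u => - (a u - a b))).
  - Lra.lra.
  - by move=> z _; apply: is_derive_opp; exact: psi_der.
  - move=> z z_in; have := a_incr (b - z) ltac:(Lra.lra).
    by rewrite (_ : b - (b - z) = z); Lra.lra.
by rewrite /psi in psi_right psi_left; split; Lra.lra.
Qed.

Lemma increment_signs (a : R -> R) (b : R) :
  (forall x, ex_derive a x) -> 0 < Derive a b ->
  exists2 d, 0 < d & forall t, 0 < t < d ->
    [/\ 0 < a (b + t) - a b, a (b - t) - a b < 0,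
        0 < Fint a (b + t) - Fint a b - a b * t
      & 0 < Fint a (b - t) - Fint a b + a b * t].
Proof.
move=> a_der a'_pos.
have [d d_gt0 a_incr] := derive_pos_increment (Derive_correct _ _ (a_der b)) a'_pos.
exists d => // t t_in.
have a_cont y : continuous a y by apply: ex_derive_continuous.
have [Fp Fm] := Fint_above_tangent a_cont a_incr t_in.
have [am ap] := a_incr t t_in.
split; Lra.lra.
Qed.

End RealIncrements.

Local Open Scope ring_scope.

Lemma inj_unitmx (F : fieldType) (n : nat) (A : 'M[F]_n) :
  (forall v : 'cV_n, A *m v = 0 -> v = 0) -> A \in unitmx.
Proof.
move=> A_inj; rewrite -unitmx_tr -row_free_unit; apply: inj_row_free => v vAT0.
apply: trmx_inj; rewrite trmx0; apply: A_inj.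
by rewrite -[A]trmxK -trmx_mul vAT0 trmx0.
Qed.

Section ReducedSystem.
Variables (K : realFieldType) (s t ap am Fp Fm : K).

Definition Amx : 'M[K]_4 := \matrix_(i, j) nth 0 (nth [::]
  [:: [:: s ^+ 2; s ^+ 2; - (t * ap); t * am];
      [:: 0; 0; ap * Fp; am * Fm];
      [:: s ^+ 3 / 2; - (s ^+ 3 / 2); 0; 0];
      [:: 1; 1; 1; 1]] i) j.

Definition gamma_weight : K := t * - (ap * am) * (Fp + Fm) / (2 * s ^+ 2).

Definition gamma_dir : 'cV[K]_4 :=
  \col_i nth 0 [:: gamma_weight; gamma_weight; - (am * Fm); ap * Fp] i.

Definition gamma_mass : K := 2 * gamma_weight - am * Fm + ap * Fp.

Definition gamma_lbound : K :=
  Num.min gamma_weight (Num.min (- (am * Fm)) (ap * Fp)) / gamma_mass.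

Hypotheses (s_gt0 : 0 < s) (t_gt0 : 0 < t) (ap_gt0 : 0 < ap) (am_lt0 : am < 0)
  (Fp_gt0 : 0 < Fp) (Fm_gt0 : 0 < Fm).

Lemma gamma_weight_gt0 : 0 < gamma_weight.
Proof.
by rewrite divr_gt0 ?mulr_gt0 ?addr_gt0 ?exprn_gt0 // oppr_gt0 pmulr_rlt0.
Qed.

Lemma gamma_dir_gt0 (i : 'I_4) : 0 < gamma_dir i 0.
Proof.
rewrite mxE; case: i => -[|[|[|[|//]]]] _ /=; try exact: gamma_weight_gt0.
  by rewrite oppr_gt0 nmulr_rlt0.
by rewrite mulr_gt0.
Qed.

Lemma gamma_mass_gt0 : 0 < gamma_mass.
Proof.
have := gamma_dir_gt0 ord0; have := gamma_dir_gt0 (inord 2); have := gamma_dir_gt0 (inord 3).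
rewrite /gamma_mass !mxE !inordK //=; lra.
Qed.

Lemma gamma_dir_lt_mass (i : 'I_4) : gamma_dir i 0 < gamma_mass.
Proof.
have := gamma_dir_gt0 ord0; have := gamma_dir_gt0 (inord 2); have := gamma_dir_gt0 (inord 3).
rewrite /gamma_mass !mxE !inordK //=; case: i => -[|[|[|[|//]]]] _ /=; lra.
Qed.

Lemma gamma_lbound_gt0 : 0 < gamma_lbound.
Proof.
have := gamma_dir_gt0 ord0; have := gamma_dir_gt0 (inord 2); have := gamma_dir_gt0 (inord 3).
rewrite !mxE !inordK //= => Fp_pos Fm_pos w_pos.
by rewrite divr_gt0 ?gamma_mass_gt0 // !lt_min w_pos Fm_pos Fp_pos.
Qed.

Lemma gamma_lbound_le (i : 'I_4) : gamma_lbound <= gamma_dir i 0 / gamma_mass.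
Proof.
rewrite ler_pM2r ?invr_gt0 ?gamma_mass_gt0 // mxE.
by case: i => -[|[|[|[|//]]]] _ /=; rewrite !ge_min lexx ?orbT.
Qed.

Lemma gamma_lbound_lt1 : gamma_lbound < 1.
Proof.
apply: le_lt_trans (gamma_lbound_le ord0) _.
by rewrite ltr_pdivrMr ?gamma_mass_gt0 // mul1r gamma_dir_lt_mass.
Qed.

Lemma Amx_solve (e : K) (g : 'cV[K]_4) :
  Amx *m g = \col_(i < 4) (if nat_of_ord i == 3%N then e else 0) ->
  g = (e / gamma_mass) *: gamma_dir.
Proof.
move/colP => E.
have := E ord0; have := E (lift ord0 ord0); have := E (lift ord0 (lift ord0 ord0)).
have := E (lift ord0 (lift ord0 (lift ord0 ord0))).
rewrite !mxE !big_ord_recl !big_ord0 !mxE /= => row3 row2 row1 row0.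
set g0 := g ord0 0 in row0 row1 row2 row3.
set g1 := g (lift ord0 ord0) 0 in row0 row1 row2 row3.
set g2 := g (lift ord0 (lift ord0 ord0)) 0 in row0 row1 row2 row3.
set g3 := g (lift ord0 (lift ord0 (lift ord0 ord0))) 0 in row0 row1 row2 row3.
have apFp_neq0 : ap * Fp != 0 by rewrite mulf_neq0 // gt_eqF.
pose q := g3 / (ap * Fp).
have g3E : g3 = q * (ap * Fp) by rewrite divfK.
have g2E : g2 = q * - (am * Fm).
  by apply: (mulIf apFp_neq0); rewrite g3E in row1; lra.
have g1E : g1 = g0.
  have s3_gt0 : 0 < s ^+ 3 / 2 by rewrite divr_gt0 ?exprn_gt0.
  by apply: (mulIf (lt0r_neq0 s3_gt0)); lra.
have g0E : g0 = q * gamma_weight.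
  have s2_neq0 : 2 * s ^+ 2 != 0 by rewrite mulf_neq0 ?expf_neq0 ?gt_eqF.
  apply: (mulIf s2_neq0); rewrite /gamma_weight mulrA divfK //.
  by rewrite g1E g2E g3E in row0; lra.
have qE : q = e / gamma_mass.
  have mass_neq0 := lt0r_neq0 gamma_mass_gt0.
  apply: (mulIf mass_neq0); rewrite divfK // /gamma_mass.
  by rewrite g1E g2E g3E g0E in row3; lra.
apply/colP => i; rewrite !mxE -qE.
case: (unliftP ord0 i) => [{}i ->|-> /=]; last by rewrite -/g0 g0E.
case: (unliftP ord0 i) => [{}i ->|-> /=]; last by rewrite -/g1 g1E g0E.
case: (unliftP ord0 i) => [{}i ->|-> /=]; last by rewrite -/g2 g2E.
by rewrite (ord1 i) /= -/g3 g3E.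
Qed.

Lemma Amx_unit : Amx \in unitmx.
Proof.
apply: inj_unitmx => v Av0.
have /Amx_solve -> : Amx *m v = \col_(i < 4) (if nat_of_ord i == 3%N then 0 else 0).
  by rewrite Av0; apply/colP => i; rewrite !mxE if_same.
by rewrite mul0r scale0r.
Qed.

Lemma Amx_solution_bounds (e : K) (g : 'cV[K]_4) : 0 < e ->
  Amx *m g = \col_(i < 4) (if nat_of_ord i == 3%N then e else 0) ->
  forall i, gamma_lbound * e <= g i 0 <= e.
Proof.
move=> e_gt0 /Amx_solve -> i; rewrite mxE.
have -> : e / gamma_mass * gamma_dir i 0 = gamma_dir i 0 / gamma_mass * e by ring.
apply/andP; split; first exact: ler_wpM2r (ltW e_gt0) _ _ (gamma_lbound_le i).
apply: ler_piMl (ltW e_gt0) _.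
by rewrite ler_pdivrMr ?gamma_mass_gt0 // mul1r ltW ?gamma_dir_lt_mass.
Qed.

End ReducedSystem.

Lemma Amat_explicit (a : R -> R) (al1 al2 s t : R) : Amat a al1 al2 s t =
  Amx s t (a (al2 + t) - a al2) (a (al2 - t) - a al2)
    (Fint a (al2 + t) - Fint a al2 - a al2 * t) (Fint a (al2 - t) - Fint a al2 + a al2 * t).
Proof.
apply/matrixP => -[[|[|[|[|//]]]] hi] [[|[|[|[|//]]]] hj];
rewrite !mxE /zeta /D1 /D2 /D3 /minor2 /P1 /= ?mxE ?inordK //=
  ?RplusE ?RminusE ?RmultE ?RoppE; ring.
Qed.

Theorem lemma16 (a : R -> R) (ha : C2 a) (al2 : R) (hpos : 0 < Derive a al2) :
  exists delta : R, 0 < delta /\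
  forall s0 t0 : R, 0 < s0 -> s0 < delta -> 0 < t0 -> t0 < delta ->
  exists lam Lam : R, 0 < lam /\ lam < Lam /\
  forall al1 : R,
    Amat a al1 al2 s0 t0 \in unitmx /\
    forall eps : R, 0 < eps -> eps < 1 ->
    forall g : 'cV[R]_4, Leps a al1 al2 s0 t0 eps g = 0 ->
      (forall i : 'I_4, 0 <= g i 0) /\
      (forall i : 'I_4, lam * eps <= g i 0 <= Lam * eps).
Proof.
have a_der x : ex_derive a x by case: ha => a' [_ [a_der _]]; exists (a' x).
have [d d_gt0 signs] := increment_signs a_der (elimT RltP hpos).
exists d; split; first exact/RltP.
move=> s t s_gt0 _ t_gt0 /RltP t_lt_d.
(* Only t0 has to be small: any s0 > 0 works. *)
have [/RltP ap_gt0 /RltP am_lt0 /RltP Fp_gt0 /RltP Fm_gt0] :=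
  signs t (conj (elimT RltP t_gt0) t_lt_d).
set ap := a (al2 + t) - a al2 in ap_gt0; set am := a (al2 - t) - a al2 in am_lt0.
set Fp := Fint a (al2 + t) - Fint a al2 - a al2 * t in Fp_gt0.
set Fm := Fint a (al2 - t) - Fint a al2 + a al2 * t in Fm_gt0.
exists (gamma_lbound s t ap am Fp Fm), 1.
split; first exact: gamma_lbound_gt0.
split; first exact: gamma_lbound_lt1.
move=> al1; rewrite Amat_explicit; split; first exact: Amx_unit.
move=> e e_gt0 _ g /eqP; rewrite /Leps subr_eq0 Amat_explicit => /eqP.
move/(Amx_solution_bounds s_gt0 t_gt0 ap_gt0 am_lt0 Fp_gt0 Fm_gt0 e_gt0) => bounds.
split=> i; have /andP[lo hi] := bounds i; last by rewrite lo mul1r.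
by apply: le_trans lo; rewrite mulr_ge0 // ltW ?gamma_lbound_gt0.
Qed.
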